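(* For all unit types $U,U'$ and all scalars $\alpha,\beta\in\mathcal S$: if $\alpha.U\equiv\beta.U'$ then $\alpha=\beta$, and if moreover $\alpha\neq0$ then $U\equiv U'$.
   Context: Fix a commutative ring $(\mathcal S,+,\times)$. Types: $T ::= U \mid \forall X.T \mid \alpha.T \mid \overline0$; unit types: $U ::= X \mid U\to T \mid \forall X.U$ ($\alpha\in\mathcal S$, $X$ type variables). Type equivalence $\equiv$ is the least congruence on types with $\alpha.\overline0\equiv\overline0$, $0.T\equiv\overline0$, $1.T\equiv T$, $\alpha.(\beta.T)\equiv(\alpha\times\beta).T$, $\forall X.\alpha.T\equiv\alpha.\forall X.T$. *)

From mathcomp Require Import all_boot all_algebra.
Set Implicit Arguments. Unset Strict Implicit. Unset Printing Implicit Defensive.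
Import GRing.Theory.
Local Open Scope ring_scope.

Section Types.
Variable S : comPzRingType.

(* Raw syntax of types, with de Bruijn indices for type variables
   (so types are identified up to alpha-conversion). *)
Inductive ty : Type :=
| TVar  : nat -> ty
| Arr   : ty -> ty -> ty
| All   : ty -> ty             (* forall X. T  (binds index 0) *)
| Scal  : S -> ty -> ty
| Zero  : ty.

Inductive is_unit : ty -> Prop :=
| u_var : forall n, is_unit (TVar n)
| u_arr : forall u t, is_unit u -> is_type t -> is_unit (Arr u t)
| u_all : forall u, is_unit u -> is_unit (All u)
with is_type : ty -> Prop :=
| t_unit : forall u, is_unit u -> is_type u
| t_all  : forall t, is_type t -> is_type (All t)
| t_scal : forall a t, is_type t -> is_type (Scal a t)
| t_zero : is_type Zero.

Inductive ty_equiv : ty -> ty -> Prop :=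
| eq_scal_zero : forall a, ty_equiv (Scal a Zero) Zero
| eq_zero_scal : forall t, is_type t -> ty_equiv (Scal 0 t) Zero
| eq_one_scal  : forall t, is_type t -> ty_equiv (Scal 1 t) t
| eq_scal_scal : forall a b t, is_type t ->
    ty_equiv (Scal a (Scal b t)) (Scal (a * b) t)
| eq_all_scal  : forall a t, is_type t ->
    ty_equiv (All (Scal a t)) (Scal a (All t))
| eq_refl  : forall t, is_type t -> ty_equiv t t
| eq_sym   : forall t t', ty_equiv t t' -> ty_equiv t' t
| eq_trans : forall t1 t2 t3, ty_equiv t1 t2 -> ty_equiv t2 t3 -> ty_equiv t1 t3
| eq_ctx_arr : forall u u' t t', is_unit u -> is_unit u' ->
    ty_equiv u u' -> ty_equiv t t' -> ty_equiv (Arr u t) (Arr u' t')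
| eq_ctx_all : forall t t', ty_equiv t t' -> ty_equiv (All t) (All t')
| eq_ctx_scal : forall a t t', ty_equiv t t' -> ty_equiv (Scal a t) (Scal a t').

End Types.

From Pilot Require Import Defs.
From mathcomp Require Import all_boot all_algebra.
Local Open Scope ring_scope.
Import GRing.Theory.

(* Every type reads as [alpha.U]: its scalar [alpha] is the product of the
   scalars it contains (0 for a type built on [0bar]) and its unit part [U]
   is obtained by erasing the scalars.  Each axiom of [ty_equiv] preserves
   the scalar, and preserves the unit part up to [ty_equiv] as long as the
   scalar is nonzero ([0.T == 0bar] forgets [T]); so [alpha.U == beta.U']
   gives [alpha = beta] and, for [alpha <> 0], [U == U']. *)

Section ScalarDecomposition.
Context {S : comPzRingType}.
Implicit Types (t u : ty S) (a : S).

Fixpoint ty_scalar t : S :=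
  match t with
  | TVar _ | Arr _ _ => 1
  | All t => ty_scalar t
  | Scal a t => a * ty_scalar t
  | Zero => 0
  end.

(* [Zero] is its own unit part; this junk value only occurs at scalar 0. *)
Fixpoint ty_unit_part t : ty S :=
  match t with
  | All t => All (ty_unit_part t)
  | Scal _ t => ty_unit_part t
  | t => t
  end.

Lemma ty_scalar_unit u : is_unit u -> ty_scalar u = 1.
Proof. by elim. Qed.

Lemma ty_unit_part_unit u : is_unit u -> ty_unit_part u = u.
Proof. by elim => //= u0 _ ->. Qed.

Lemma is_type_unit_part t : is_type t -> is_type (ty_unit_part t).
Proof.
elim => //= [u Hu | t0 _ IH | ]; last exact: t_zero.
- by rewrite ty_unit_part_unit //; apply: t_unit.
- exact: t_all.
Qed.

Lemma ty_equiv_scalar {t t'} : ty_equiv t t' -> ty_scalar t = ty_scalar t'.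
Proof.
elim => //=.
- by move=> a; rewrite mulr0.
- by move=> t0 _; rewrite mul0r.
- by move=> t0 _; rewrite mul1r.
- by move=> a b t0 _; rewrite mulrA.
- by move=> t1 t2 t3 _ -> _ ->.
- by move=> a t0 t0' _ ->.
Qed.

Lemma ty_equiv_unit_part {t t'} : ty_equiv t t' -> ty_scalar t <> 0 ->
  ty_equiv (ty_unit_part t) (ty_unit_part t').
Proof.
have refl_part t0 : is_type t0 -> ty_equiv (ty_unit_part t0) (ty_unit_part t0).
  by move=> Ht0; apply/Defs.eq_refl/is_type_unit_part.
elim => /= {t t'}.
- by move=> a _; apply: Defs.eq_refl; apply: t_zero.
- by move=> t0 _; rewrite mul0r.
- by move=> t0 Ht0 _; apply: refl_part.
- by move=> a b t0 Ht0 _; apply: refl_part.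
- by move=> a t0 Ht0 _; apply/Defs.eq_refl/t_all/is_type_unit_part.
- by move=> t0 Ht0 _; apply: refl_part.
- move=> t1 t2 H12 IH nz2; apply/Defs.eq_sym/IH.
  by rewrite (ty_equiv_scalar H12).
- move=> t1 t2 t3 H12 IH12 _ IH23 nz1; apply: Defs.eq_trans (IH12 nz1) (IH23 _).
  by rewrite -(ty_equiv_scalar H12).
- by move=> u u' t0 t0' Hu Hu' Huu' _ Ht _ _; apply: eq_ctx_arr.
- by move=> t0 t0' _ IH nz; apply/eq_ctx_all/IH.
- by move=> a t0 t0' _ IH nz; apply: IH => z; apply: nz; rewrite z mulr0.
Qed.

End ScalarDecomposition.

Theorem mainTheorem18 (S : comPzRingType) (U U' : ty S) (a b : S) :
  is_unit U -> is_unit U' ->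
  ty_equiv (Scal a U) (Scal b U') ->
  a = b /\ (a <> 0 -> ty_equiv U U').
Proof.
move=> HU HU' Heq.
have scalar_eq := ty_equiv_scalar Heq.
rewrite /= !ty_scalar_unit // !mulr1 in scalar_eq.
split=> // a_nz.
have := ty_equiv_unit_part Heq.
by rewrite /= !ty_unit_part_unit // ty_scalar_unit // mulr1; apply.
Qed.
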